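(* Let $\Phi:\mathbb{R}^N\to\mathbb{R}^M$ and $L:\mathbb{R}^P\to\mathbb{R}^N$ be linear operators, let $\|\cdot\|_A$ be a norm on $\mathbb{R}^P$ with dual norm $\|\cdot\|_A^*$, and set $R(x)=\|L^*x\|_A$. Let $y\in\mathbb{R}^M$, $\lambda>0$, and let $x^\star$ be a minimizer of $$\min_{x\in\mathbb{R}^N}\ \tfrac12\|y-\Phi x\|_2^2+\lambda R(x).$$ Assume $\|\cdot\|_A$ is decomposable at $u^\star=L^*x^\star$, with associated subspace $T$ and vector $e\in T$, and let $S=T^\perp$. If $$\langle L_T^*h,\,e\rangle<\|L_S^*h\|_A\qquad\text{for all } h\in\ker(\Phi)\setminus\{0\},$$ then $x^\star$ is the unique minimizer of this problem.
   Context: For a subspace $V\subset\mathbb{R}^P$, $P_V$ denotes the orthogonal projector onto $V$, and $L_V=LP_V$, $L_V^*=P_VL^*$, $\alpha_V=P_V\alpha$ for $\alpha\in\mathbb{R}^P$. A norm $\|\cdot\|_A$ on $\mathbb{R}^P$ is decomposable at $u\in\mathbb{R}^P$ if (i) there exist a subspace $T\subset\mathbb{R}^P$ and a vector $e\in T$ such that the subdifferential of $\|\cdot\|_A$ at $u$ is $\partial\|\cdot\|_A(u)=\{\alpha\in\mathbb{R}^P:\ \alpha_T=e,\ \|\alpha_{T^\perp}\|_A^*\le 1\}$, and (ii) for every $z\in T^\perp$, $\|z\|_A=\sup\{\langle v,z\rangle: v\in T^\perp,\ \|v\|_A^*\le 1\}$. *)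

From HB Require Import structures.
From mathcomp Require Import all_boot all_order all_algebra.
From mathcomp Require Import classical_sets reals.
Set Implicit Arguments. Unset Strict Implicit. Unset Printing Implicit Defensive.
Import Order.TTheory GRing.Theory Num.Theory.
Local Open Scope ring_scope.
Local Open Scope classical_set_scope.

Definition dotv (R : realType) (n : nat) (u v : 'cV[R]_n) : R :=
  \sum_(i < n) u i 0 * v i 0.

Definition is_norm (R : realType) (n : nat) (f : 'cV[R]_n -> R) : Prop :=
  [/\ (forall x, f x = 0 -> x = 0),
      (forall (a : R) x, f (a *: x) = `|a| * f x) &
      (forall x y, f (x + y) <= f x + f y)].

Definition dual_norm (R : realType) (n : nat) (f : 'cV[R]_n -> R) (z : 'cV[R]_n) : R :=
  sup [set dotv v z | v in [set v | f v <= 1]].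

Definition subdiff (R : realType) (n : nat) (f : 'cV[R]_n -> R) (u : 'cV[R]_n)
  : set 'cV[R]_n :=
  [set a | forall w, f u + dotv a (w - u) <= f w].

(* PT is the orthogonal projector onto a subspace T (T = range PT). *)
Definition orth_proj (R : realType) (n : nat) (PT : 'M[R]_n) : Prop :=
  PT^T = PT /\ PT *m PT = PT.

(* Decomposability of the norm f at u, with subspace T (given by its
   orthogonal projector PT; P_{T^perp} = 1 - PT) and vector e in T. *)
Definition decomposable_at (R : realType) (n : nat) (f : 'cV[R]_n -> R)
  (u : 'cV[R]_n) (PT : 'M[R]_n) (e : 'cV[R]_n) : Prop :=
  [/\ orth_proj PT,
      PT *m e = e,
      subdiff f u = [set a | PT *m a = e /\ dual_norm f ((1%:M - PT) *m a) <= 1] &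
      (forall z, (1%:M - PT) *m z = z ->
         f z = sup [set dotv v z | v in
                     [set v | (1%:M - PT) *m v = v /\ dual_norm f v <= 1]])].

Definition objective (R : realType) (M N P : nat) (Phi : 'M[R]_(M, N))
  (L : 'M[R]_(N, P)) (f : 'cV[R]_P -> R) (y : 'cV[R]_M) (lam : R)
  (x : 'cV[R]_N) : R :=
  2^-1 * dotv (y - Phi *m x) (y - Phi *m x) + lam * f (L^T *m x).

Definition is_minimizer (R : realType) (N : nat) (J : 'cV[R]_N -> R)
  (x : 'cV[R]_N) : Prop := forall z, J x <= J z.

(* Both minimizers have the same data fit: the squared residual is strictly
   convex and the regularizer is convex, so the midpoint of two minimizers
   with different images under Phi would do strictly better.  Hence
   h := x - xs lies in ker Phi, and the two minimizers also share the value
   of R.  Decomposability and the null space condition for -h produce a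
   subgradient a = e + v of the norm at L^T xs, with v in S, dual norm of v
   at most 1 and <v, L_S^T h> close enough to ||L_S^T h||_A that
   <a, L^T h> > 0; then R(x) >= R(xs) + <a, L^T h> > R(xs) unless h = 0. *)
From HB Require Import structures.
From mathcomp Require Import all_boot all_order all_algebra.
From mathcomp Require Import classical_sets reals.
From mathcomp Require Import ring lra.
Import Order.TTheory GRing.Theory Num.Theory.
Local Open Scope classical_set_scope.
Local Open Scope ring_scope.

Section InnerProduct.
Context {R : realType} {n : nat}.
Implicit Types u v w : 'cV[R]_n.

Lemma dotvC u v : dotv u v = dotv v u.
Proof. by apply: eq_bigr => i _; rewrite mulrC. Qed.

Lemma dotvDl u w v : dotv (u + w) v = dotv u v + dotv w v.
Proof. by rewrite /dotv -big_split; apply: eq_bigr => i _; rewrite mxE mulrDl. Qed.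

Lemma dotvZl (a : R) u v : dotv (a *: u) v = a * dotv u v.
Proof. by rewrite /dotv mulr_sumr; apply: eq_bigr => i _; rewrite mxE mulrA. Qed.

Lemma dotvNl u v : dotv (- u) v = - dotv u v.
Proof. by rewrite -scaleN1r dotvZl mulN1r. Qed.

Lemma dotvDr u w v : dotv v (u + w) = dotv v u + dotv v w.
Proof. by rewrite dotvC dotvDl !(dotvC v). Qed.

Lemma dotvZr (a : R) u v : dotv v (a *: u) = a * dotv v u.
Proof. by rewrite dotvC dotvZl dotvC. Qed.

Lemma dotvNr u v : dotv v (- u) = - dotv v u.
Proof. by rewrite dotvC dotvNl dotvC. Qed.

Lemma dotv0r v : dotv v 0 = 0.
Proof. by rewrite -(scale0r (0 : 'cV[R]_n)) dotvZr mul0r. Qed.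

Lemma dotv_mull (A : 'M[R]_n) u v : dotv (A *m u) v = dotv u (A^T *m v).
Proof.
have dotvE w w' : dotv w w' = (w^T *m w') 0 0.
  by rewrite !mxE; apply: eq_bigr => i _; rewrite mxE.
by rewrite !dotvE trmx_mul mulmxA.
Qed.

Lemma dotv_ge0 u : 0 <= dotv u u.
Proof. by apply: sumr_ge0 => i _; rewrite -expr2 sqr_ge0. Qed.

Lemma dotv_eq0 u : dotv u u = 0 -> u = 0.
Proof.
move=> u0; apply/matrixP => i j; rewrite (ord1 j) mxE.
have sq_ge0 (k : 'I_n) : true -> 0 <= u k 0 * u k 0.
  by rewrite -expr2 sqr_ge0.
by move/eqP: (psumr_eq0P sq_ge0 u0 (i:=i) isT); rewrite mulf_eq0 orbb => /eqP.
Qed.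

Lemma dotv_midpoint u v :
  dotv (2^-1 *: (u + v)) (2^-1 *: (u + v)) =
  2^-1 * dotv u u + 2^-1 * dotv v v - 4^-1 * dotv (u - v) (u - v).
Proof.
rewrite !(dotvZl, dotvZr, dotvDl, dotvDr, dotvNl, dotvNr) (dotvC v u).
by field.
Qed.

End InnerProduct.

Section Norm.
Context {R : realType} {n : nat} {f : 'cV[R]_n -> R}.
Hypothesis normf : is_norm f.

Lemma norm0 : f 0 = 0.
Proof. by case: normf => _ fZ _; rewrite -(scale0r 0) fZ normr0 mul0r. Qed.

Lemma normN u : f (- u) = f u.
Proof. by case: normf => _ fZ _; rewrite -scaleN1r fZ normrN normr1 mul1r. Qed.

Lemma norm_midpoint u v : f (2^-1 *: (u + v)) <= 2^-1 * f u + 2^-1 * f v.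
Proof.
case: normf => _ fZ fD.
by rewrite fZ ger0_norm ?invr_ge0 ?ler0n // -mulrDr ler_wpM2l ?invr_ge0 ?ler0n.
Qed.

Lemma dual_norm0_le1 : dual_norm f 0 <= 1.
Proof.
apply: ge_sup; first by exists (dotv 0 (0 : 'cV[R]_n)), 0; rewrite //= norm0 ler01.
by move=> r [w _ <-]; rewrite dotv0r ler01.
Qed.

Lemma decomposable_subgradient_gt {u PT e w c} :
  decomposable_at f u PT e -> c < f ((1%:M - PT) *m w) ->
  exists2 a, subdiff f u a & dotv (PT *m w) e + c < dotv a w.
Proof.
case=> [[PTsym PTid] PTe subdiffE fS] ltcf.
have PS_idem : (1%:M - PT) *m (1%:M - PT) = 1%:M - PT.
  by rewrite mulmxBl mul1mx mulmxBr mulmx1 PTid subrr subr0.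
set z := (1%:M - PT) *m w.
have ballS_ne : [set dotv v z | v in
    [set v | (1%:M - PT) *m v = v /\ dual_norm f v <= 1]] !=set0.
  by exists (dotv 0 z), 0; split; rewrite ?mulmx0 ?dual_norm0_le1.
have zS : (1%:M - PT) *m z = z by rewrite /z mulmxA PS_idem.
move: ltcf; rewrite -/z fS // => /(sup_gt ballS_ne) [_ [v [vS vdual] <-] ltcv].
have PTv : PT *m v = 0 by rewrite -vS mulmxA mulmxBr mulmx1 PTid subrr mul0mx.
exists (e + v).
  rewrite subdiffE; split; first by rewrite mulmxDr PTe PTv addr0.
  by rewrite mulmxDr vS mulmxBl mul1mx PTe subrr add0r.
rewrite dotvDl.
have -> : dotv (PT *m w) e = dotv e w.
  by rewrite dotvC -{2}PTe dotv_mull PTsym.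
have -> : dotv v w = dotv v z.
  by rewrite -{1}vS dotv_mull linearB /= trmx1 PTsym.
by rewrite ltrD2l.
Qed.

Lemma decomposable_norm_lt {u PT e w} :
  decomposable_at f u PT e -> - dotv (PT *m w) e < f ((1%:M - PT) *m w) ->
  f u < f (u + w).
Proof.
move=> dec /(decomposable_subgradient_gt dec) [a subdiff_a].
rewrite subrr => a_pos.
by apply: lt_le_trans (subdiff_a (u + w)); rewrite [u + w]addrC addrK ltrDl.
Qed.

End Norm.

Section Minimizers.
Context {R : realType} {M N P : nat} {Phi : 'M[R]_(M, N)} {L : 'M[R]_(N, P)}.
Context {f : 'cV[R]_P -> R} {y : 'cV[R]_M} {lam : R}.
Hypotheses (normf : is_norm f) (lam_ge0 : 0 <= lam).
Local Notation J := (objective Phi L f y lam).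

Lemma objective_midpoint x1 x2 :
  J (2^-1 *: (x1 + x2)) <= 2^-1 * J x1 + 2^-1 * J x2 -
    8^-1 * dotv (Phi *m x1 - Phi *m x2) (Phi *m x1 - Phi *m x2).
Proof.
have res_mid : y - Phi *m (2^-1 *: (x1 + x2)) =
    2^-1 *: ((y - Phi *m x1) + (y - Phi *m x2)).
  rewrite -scalemxAr mulmxDr.
  by apply/matrixP => i j; rewrite !mxE; field.
have diff_res : (y - Phi *m x1) - (y - Phi *m x2) = - (Phi *m x1 - Phi *m x2).
  by apply/matrixP => i j; rewrite !mxE; ring.
have reg_mid := ler_wpM2l lam_ge0 (norm_midpoint normf (L^T *m x1) (L^T *m x2)).
rewrite /objective res_mid dotv_midpoint diff_res dotvNl dotvNr opprK.
rewrite -scalemxAr mulmxDr; lra.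
Qed.

Lemma minimizers_same_image {x1 x2} :
  is_minimizer J x1 -> is_minimizer J x2 -> Phi *m x1 = Phi *m x2.
Proof.
move=> min1 min2.
have mid_ge := le_trans (min1 (2^-1 *: (x1 + x2))) (objective_midpoint x1 x2).
have J21 := min2 x1; have sq_ge0 := dotv_ge0 (Phi *m x1 - Phi *m x2).
have /dotv_eq0 /eqP : dotv (Phi *m x1 - Phi *m x2) (Phi *m x1 - Phi *m x2) = 0.
  by lra.
by rewrite subr_eq0 => /eqP.
Qed.

End Minimizers.

Theorem theorem1 (R : realType) (M N P : nat) (Phi : 'M[R]_(M, N))
  (L : 'M[R]_(N, P)) (f : 'cV[R]_P -> R) (y : 'cV[R]_M) (lam : R)
  (xs : 'cV[R]_N) (PT : 'M[R]_P) (e : 'cV[R]_P) :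
  is_norm f -> 0 < lam ->
  is_minimizer (objective Phi L f y lam) xs ->
  decomposable_at f (L^T *m xs) PT e ->
  (forall h : 'cV[R]_N, Phi *m h = 0 -> h != 0 ->
     dotv (PT *m L^T *m h) e < f ((1%:M - PT) *m L^T *m h)) ->
  forall x : 'cV[R]_N, is_minimizer (objective Phi L f y lam) x -> x = xs.
Proof.
move=> normf lam_gt0 minxs dec nsp x minx.
have [/eqP|h_neq0] := eqVneq (x - xs) 0; first by rewrite subr_eq0 => /eqP.
have samePhi := minimizers_same_image normf (ltW lam_gt0) minx minxs.
have Phih : Phi *m (x - xs) = 0 by rewrite mulmxBr samePhi subrr.
have nsp_h : - dotv (PT *m (L^T *m (x - xs))) e <
               f ((1%:M - PT) *m (L^T *m (x - xs))).
  have := nsp (- (x - xs)).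
  rewrite mulmxN Phih oppr0 oppr_eq0 => /(_ erefl h_neq0).
  by rewrite !mulmxN dotvNl (normN normf) !mulmxA.
have := decomposable_norm_lt normf dec nsp_h.
rewrite -mulmxDr addrC subrK ltNge => /negP reg_gt; exfalso; apply: reg_gt.
by have := minx xs; rewrite /objective samePhi lerD2l ler_pM2l.
Qed.
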